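(* Let $q>1$ and $\hbar,m>0$. For $N\ge0$ let $$H_N^{(s)}(x,it;q)=\sum_{k=0}^{\lfloor N/2\rfloor}\frac{\big(\frac{i\hbar t}{2m}\big)^k[N]_q!\,x^{N-2k}}{[N-2k]_q!\,k!}.$$ Then for real $x,t,p$, $$e^{-\frac{i}{\hbar}\frac{p^2}{2m}t}\,e_q\Big(\frac{i}{\hbar}px\Big)=\sum_{N=0}^\infty\Big(\frac{i}{\hbar}\Big)^N\frac{p^N}{[N]_q!}H_N^{(s)}(x,it;q),$$ and each $\psi(x,t)=H_N^{(s)}(x,it;q)$ solves the $q$-Schrödinger equation $\big(\partial_t-\frac{i\hbar}{2m}D_x^2\big)\psi(x,t)=0$ for $x\ne0$.
   Context: For $n\ge 0$ let $[n]_q=\frac{q^n-1}{q-1}$, $[0]_q!=1$, $[n]_q!=[1]_q\cdots[n]_q$, and $e_q(z)=\sum_{n\ge0}z^n/[n]_q!$ (entire for $q>1$). $D_x$ is the $q$-derivative in $x$ at fixed $t$: $D_xf(x,t)=\frac{f(qx,t)-f(x,t)}{(q-1)x}$, $D_x^2=D_x\circ D_x$. *)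

From Stdlib Require Import Reals ClassicalEpsilon Factorial.
From Coquelicot Require Import Coquelicot.
Open Scope R_scope.

Definition qint (q : R) (n : nat) : R := (q ^ n - 1) / (q - 1).

Fixpoint qfact (q : R) (n : nat) : R :=
  match n with
  | O => 1
  | S k => qfact q k * qint q (S k)
  end.

Definition eq_term (q : R) (z : C) (n : nat) : C := (z ^ n / RtoC (qfact q n))%C.

(* e_q(z) = sum_{n>=0} z^n/[n]_q!  (the sum of the convergent series; chosen by
   classical description, it is the unique limit whenever the series converges) *)
Definition e_q (q : R) (z : C) : C :=
  epsilon (inhabits (RtoC 0)) (fun l => is_series (eq_term q z) l).

Definition expI (theta : R) : C := (cos theta, sin theta).

Definition Hs (q hbar m : R) (N : nat) (x t : R) : C :=
  sum_n (fun k =>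
    ((Ci * RtoC (hbar * t / (2 * m))) ^ k * RtoC (qfact q N)
      * RtoC (x ^ (N - 2 * k)) / (RtoC (qfact q (N - 2 * k)) * RtoC (INR (fact k))))%C)
    (Nat.div2 N).

Definition Dx (q : R) (f : R -> R -> C) (x t : R) : C :=
  ((f (Rmult q x) t - f x t) / RtoC ((q - 1) * x))%C.

Definition Dx2 (q : R) (f : R -> R -> C) : R -> R -> C := Dx q (Dx q f).

From Pilot Require Import Defs.
From Stdlib Require Import Reals Lia Lra Factorial ClassicalEpsilon.
From Coquelicot Require Import Coquelicot.
Open Scope R_scope.

(* The generating function is a Cauchy product: the exponential series of
   e^{i th} with th = -p^2 t/(2 m hbar), spread over the even indices, times the
   q-exponential series of z = i p x/hbar.  Since (i p/hbar)^2 (i hbar t/(2m)) = i th,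
   the summands of total degree N in p assemble into (i/hbar)^N p^N H_N/[N]_q!.
   For the q-Schroedinger equation, D_x y^n = [n]_q y^(n-1) away from 0, so D_x^2 and
   d/dt act termwise on the finite sum H_N = sum_k x^(N-2k) t^k c_k, and the
   coefficients c_k = (i hbar/(2m))^k [N]_q!/([N-2k]_q! k!) satisfy
   k c_k = (i hbar/(2m)) [N-2k+2]_q [N-2k+1]_q c_(k-1). *)

(* Coquelicot goals are often stated at some structure's carrier; restating
   them at type [C] lets [ring] and [field] recognise the operations. *)
Ltac C_goal := match goal with |- ?A = ?B => change (@eq C A B) end.

Lemma RtoC_neq_0 r : r <> 0 -> RtoC r <> 0%C.
Proof. intros Hr E. apply Hr. exact (f_equal fst E). Qed.

Lemma sum_n_C (f : nat -> C) N :
  sum_n f N = (sum_n (fun n => fst (f n)) N, sum_n (fun n => snd (f n)) N).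
Proof.
  induction N as [|N IH].
  - rewrite !sum_O. now destruct (f 0%nat).
  - now rewrite !sum_Sn, IH.
Qed.

Lemma is_series_C (f : nat -> C) l :
  is_series f l <->
  is_series (fun n => fst (f n)) (fst l) /\ is_series (fun n => snd (f n)) (snd l).
Proof.
  unfold is_series. split.
  - intros H. split; apply filterlim_locally; intros eps;
      generalize (proj1 (filterlim_locally _ _) H eps); apply filter_imp;
      intros n; rewrite sum_n_C; now intros [H1 H2].
  - intros [H1 H2]. apply filterlim_locally. intros eps.
    generalize (filter_and _ _ (proj1 (filterlim_locally _ _) H1 eps)
                               (proj1 (filterlim_locally _ _) H2 eps)).
    apply filter_imp. intros n. now rewrite sum_n_C.
Qed.

Lemma is_series_RtoC_scal (r : nat -> R) l c :
  is_series r l -> is_series (fun n => (RtoC (r n) * c)%C) (RtoC l * c)%C.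
Proof.
  intros H. apply is_series_C. split.
  - replace (fst (RtoC l * c)%C) with (l * fst c) by (simpl; ring).
    eapply is_series_ext; [|exact (is_series_scal_r (fst c) _ _ H)].
    intros n. simpl. ring.
  - replace (snd (RtoC l * c)%C) with (l * snd c) by (simpl; ring).
    eapply is_series_ext; [|exact (is_series_scal_r (snd c) _ _ H)].
    intros n. simpl. ring.
Qed.

Lemma ex_series_Rabs_proj (pr : C -> R) (a : nat -> C) :
  (forall z, Rabs (pr z) <= Cmod z) ->
  ex_series (fun n => Cmod (a n)) -> ex_series (fun n => Rabs (pr (a n))).
Proof.
  intros Hpr. apply (@ex_series_le R_AbsRing R_CompleteNormedModule).
  intros n. change (Rabs (Rabs (pr (a n))) <= Cmod (a n)).
  rewrite Rabs_Rabsolu. apply Hpr.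
Qed.

Lemma Rabs_fst_le_Cmod (z : C) : Rabs (fst z) <= Cmod z.
Proof. eapply Rle_trans; [apply Rmax_l | apply Rmax_Cmod]. Qed.

Lemma Rabs_snd_le_Cmod (z : C) : Rabs (snd z) <= Cmod z.
Proof. eapply Rle_trans; [apply Rmax_r | apply Rmax_Cmod]. Qed.

(* Reduced to the real Mertens theorem through the four products of components. *)
Lemma is_series_Cmult (a b : nat -> C) la lb :
  is_series a la -> is_series b lb ->
  ex_series (fun n => Cmod (a n)) -> ex_series (fun n => Cmod (b n)) ->
  is_series (fun n => sum_n (fun k => (a k * b (n - k)%nat)%C) n) (la * lb)%C.
Proof.
  intros Ha Hb Aa Ab.
  apply is_series_C in Ha as [Ha1 Ha2]. apply is_series_C in Hb as [Hb1 Hb2].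
  pose proof (ex_series_Rabs_proj fst a Rabs_fst_le_Cmod Aa) as Aa1.
  pose proof (ex_series_Rabs_proj snd a Rabs_snd_le_Cmod Aa) as Aa2.
  pose proof (ex_series_Rabs_proj fst b Rabs_fst_le_Cmod Ab) as Ab1.
  pose proof (ex_series_Rabs_proj snd b Rabs_snd_le_Cmod Ab) as Ab2.
  apply is_series_C. split.
  - pose proof (is_series_minus _ _ _ _ (is_series_mult _ _ _ _ Ha1 Hb1 Aa1 Ab1)
                  (is_series_mult _ _ _ _ Ha2 Hb2 Aa2 Ab2)) as P.
    eapply is_series_ext; [|exact P].
    intros n. rewrite sum_n_C. simpl. now rewrite !sum_n_Reals, minus_sum.
  - pose proof (is_series_plus _ _ _ _ (is_series_mult _ _ _ _ Ha1 Hb2 Aa1 Ab2)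
                  (is_series_mult _ _ _ _ Ha2 Hb1 Aa2 Ab1)) as P.
    eapply is_series_ext; [|exact P].
    intros n. rewrite sum_n_C. simpl. now rewrite !sum_n_Reals, plus_sum.
Qed.

Definition at_even {G : AbelianMonoid} (a : nat -> G) (j : nat) : G :=
  if Nat.even j then a (Nat.div2 j) else zero.

Definition at_odd {G : AbelianMonoid} (a : nat -> G) (j : nat) : G :=
  if Nat.even j then zero else a (Nat.div2 j).

Section Interleaving.
Context {G : AbelianMonoid}.

Lemma at_even_double (a : nat -> G) k : at_even a (2 * k) = a k.
Proof. unfold at_even. now rewrite Nat.div2_double, Nat.even_mul. Qed.

Lemma at_even_S_double (a : nat -> G) k : at_even a (S (2 * k)) = zero.
Proof. unfold at_even. now rewrite Nat.even_succ, Nat.odd_mul. Qed.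

Lemma at_odd_double (a : nat -> G) k : at_odd a (2 * k) = zero.
Proof. unfold at_odd. now rewrite Nat.even_mul. Qed.

Lemma at_odd_S (a : nat -> G) n : at_odd a (S n) = at_even a n.
Proof.
  destruct (Nat.Even_or_Odd n) as [[k ->]|[k ->]].
  - unfold at_odd. rewrite Nat.div2_succ_double, Nat.even_succ, Nat.odd_mul.
    symmetry. apply at_even_double.
  - rewrite Nat.add_1_r, at_even_S_double.
    unfold at_odd. now rewrite Nat.even_succ, Nat.odd_succ, Nat.even_mul.
Qed.

Lemma at_odd_S_double (a : nat -> G) k : at_odd a (S (2 * k)) = a k.
Proof. now rewrite at_odd_S, at_even_double. Qed.

Lemma sum_n_even_support (h : nat -> G) :
  (forall k, h (S (2 * k)) = zero) ->
  forall N, sum_n h N = sum_n (fun k => h (2 * k)%nat) (Nat.div2 N).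
Proof.
  intros Hodd.
  assert (Hpair : forall M, sum_n h (2 * M) = sum_n (fun k => h (2 * k)%nat) M /\
                            sum_n h (S (2 * M)) = sum_n (fun k => h (2 * k)%nat) M).
  { intros M. induction M as [|M [IH1 IH2]].
    - pose proof (Hodd 0%nat) as H0. simpl in *.
      rewrite sum_Sn, !sum_O, H0, plus_zero_r. now split.
    - assert (Heven : sum_n h (2 * S M) = sum_n (fun k => h (2 * k)%nat) (S M)).
      { replace (2 * S M)%nat with (S (S (2 * M))) by lia.
        rewrite sum_Sn, IH2, sum_Sn. do 3 f_equal. lia. }
      split; [exact Heven|].
      now rewrite sum_Sn, Heven, Hodd, plus_zero_r. }
  intros N. destruct (Nat.Even_or_Odd N) as [[M ->]|[M ->]].
  - rewrite Nat.div2_double. apply Hpair.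
  - rewrite Nat.add_1_r, Nat.div2_succ_double. apply Hpair.
Qed.

End Interleaving.

Lemma filterlim_div2 : filterlim Nat.div2 eventually eventually.
Proof.
  intros P [N0 HN]. exists (2 * N0)%nat. intros n Hn. apply HN.
  rewrite Nat.div2_div. apply Nat.div_le_lower_bound; lia.
Qed.

Section InterleavedSeries.
Context {K : AbsRing} {V : NormedModule K}.

Lemma is_series_at_even (a : nat -> V) l : is_series a l -> is_series (at_even a) l.
Proof.
  intros H. unfold is_series.
  eapply filterlim_ext.
  - intros N. symmetry. rewrite (sum_n_even_support (at_even a) (at_even_S_double a) N).
    apply sum_n_ext. intros k. apply at_even_double.
  - eapply filterlim_comp; [exact filterlim_div2 | exact H].
Qed.

Lemma is_series_at_odd (a : nat -> V) l : is_series a l -> is_series (at_odd a) l.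
Proof.
  intros H. apply is_series_decr_1.
  replace (plus l (opp (at_odd a 0))) with l.
  2: { transitivity (plus l (@zero V)); [apply eq_sym, plus_zero_r|].
       f_equal. exact (eq_sym (@opp_zero V)). }
  eapply is_series_ext; [intros n; symmetry; apply at_odd_S|].
  now apply is_series_at_even.
Qed.

End InterleavedSeries.

Lemma exp_series (x : R) : is_series (fun n => x ^ n / INR (fact n)) (exp x).
Proof.
  unfold exp. destruct (exist_exp x) as [l Hl]. simpl.
  eapply is_series_ext; [|apply is_series_Reals; exact Hl].
  intros n. simpl. unfold Rdiv. ring.
Qed.

Lemma cos_series (x : R) : is_series (fun i => cos_n i * (x²) ^ i) (cos x).
Proof. unfold cos. destruct (exist_cos (x²)) as [l Hl]. now apply is_series_Reals. Qed.

Lemma sin_series (x : R) : is_series (fun i => x * (sin_n i * (x²) ^ i)) (sin x).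
Proof.
  unfold sin. destruct (exist_sin (x²)) as [l Hl].
  apply (is_series_scal_l x (fun i => sin_n i * (x²) ^ i)). now apply is_series_Reals.
Qed.

Lemma Cpow_Ci_scal_even (th : R) i :
  ((Ci * RtoC th) ^ (2 * i))%C = RtoC ((-1) ^ i * (th²) ^ i).
Proof.
  rewrite Cpow_mult_r.
  replace ((Ci * RtoC th) ^ 2)%C with (RtoC (-1 * th²))
    by (unfold Rsqr; apply injective_projections; simpl; ring).
  rewrite <- RtoC_pow. f_equal. apply Rpow_mult_distr.
Qed.

(* The even and odd parts of the exponential series are those of cosine and sine. *)
Lemma is_series_expI (th : R) :
  is_series (fun k => ((Ci * RtoC th) ^ k / RtoC (INR (fact k)))%C) (expI th).
Proof.
  pose proof (is_series_at_even _ _ (is_series_RtoC_scal _ _ 1%C (cos_series th))) as Hcos.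
  pose proof (is_series_at_odd _ _ (is_series_RtoC_scal _ _ Ci (sin_series th))) as Hsin.
  replace (expI th) with (plus (RtoC (cos th) * 1)%C (RtoC (sin th) * Ci)%C)
    by (unfold expI; apply injective_projections; simpl; ring).
  eapply is_series_ext; [|exact (is_series_plus _ _ _ _ Hcos Hsin)].
  intros n. pose proof (INR_fact_neq_0 n) as Hfact.
  destruct (Nat.Even_or_Odd n) as [[k ->]|[k ->]].
  - rewrite at_even_double, at_odd_double, Cpow_Ci_scal_even, <- RtoC_div by exact Hfact.
    unfold cos_n. apply injective_projections; simpl; field; exact Hfact.
  - rewrite Nat.add_1_r in *. rewrite at_even_S_double, at_odd_S_double.
    rewrite Cpow_S, Cpow_Ci_scal_even. unfold sin_n.
    replace (2 * k + 1)%nat with (S (2 * k)) by lia.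
    apply injective_projections; simpl; field; exact Hfact.
Qed.

Section QNumbers.
Variable q : R.
Hypothesis hq : 1 < q.

Lemma INR_le_qint n : INR n <= qint q n.
Proof.
  induction n as [|n IH].
  - unfold qint. simpl. unfold Rdiv. rewrite Rminus_diag, Rmult_0_l. lra.
  - replace (qint q (S n)) with (qint q n + q ^ n) by (unfold qint; simpl; field; lra).
    rewrite S_INR. assert (1 <= q ^ n) by (apply pow_R1_Rle; lra). lra.
Qed.

Lemma INR_fact_le_qfact n : INR (fact n) <= qfact q n.
Proof.
  induction n as [|n IH].
  - simpl. lra.
  - simpl qfact. change (fact (S n)) with (S n * fact n)%nat. rewrite mult_INR, Rmult_comm.
    apply Rmult_le_compat; auto using pos_INR, INR_le_qint.
Qed.

Lemma qfact_pos n : 0 < qfact q n.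
Proof. eapply Rlt_le_trans; [apply INR_fact_lt_0 | apply INR_fact_le_qfact]. Qed.

Lemma qfact_neq_0 n : qfact q n <> 0.
Proof. apply Rgt_not_eq, qfact_pos. Qed.

Lemma qint_pos n : (0 < n)%nat -> 0 < qint q n.
Proof. intros Hn. eapply Rlt_le_trans; [apply lt_0_INR, Hn | apply INR_le_qint]. Qed.

Lemma Cmod_eq_term_le z n : Cmod (eq_term q z n) <= Cmod z ^ n / INR (fact n).
Proof.
  unfold eq_term. rewrite Cmod_div by apply RtoC_neq_0, qfact_neq_0.
  rewrite Cmod_pow, Cmod_R, Rabs_pos_eq by (left; apply qfact_pos).
  apply Rmult_le_compat_l; [apply pow_le, Cmod_ge_0|].
  apply Rinv_le_contravar; [apply INR_fact_lt_0 | apply INR_fact_le_qfact].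
Qed.

Lemma ex_series_Cmod_eq_term z : ex_series (fun n => Cmod (eq_term q z n)).
Proof.
  apply (@ex_series_le R_AbsRing R_CompleteNormedModule)
    with (b := fun n => Cmod z ^ n / INR (fact n)).
  - intros n. change (Rabs (Cmod (eq_term q z n)) <= Cmod z ^ n / INR (fact n)).
    rewrite Rabs_pos_eq by apply Cmod_ge_0. apply Cmod_eq_term_le.
  - eexists. apply exp_series.
Qed.

Lemma is_series_e_q z : is_series (eq_term q z) (e_q q z).
Proof.
  unfold e_q. apply epsilon_spec.
  apply (@ex_series_le C_AbsRing C_CompleteNormedModule)
    with (b := fun n => Cmod (eq_term q z n)).
  - intros n. apply Rle_refl.
  - apply ex_series_Cmod_eq_term.
Qed.

End QNumbers.

Lemma Cmod_at_even (a : nat -> C) n : Cmod (at_even a n) = at_even (fun k => Cmod (a k)) n.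
Proof. unfold at_even. destruct (Nat.even n); [reflexivity | apply Cmod_0]. Qed.

Section GeneratingFunction.
Variables q hbar m x t p : R.
Hypothesis hq : 1 < q.
Hypothesis hh : hbar <> 0.
Hypothesis hm : m <> 0.

Let th : R := - (p ^ 2 / (2 * m)) * t / hbar.
Let z : C := (Ci / RtoC hbar * RtoC (p * x))%C.
Let u : C := (Ci / RtoC hbar * RtoC p)%C.
Let w : C := (Ci * RtoC (hbar * t / (2 * m)))%C.

Lemma Ci_th_eq : (Ci * RtoC th = u ^ 2 * w)%C.
Proof.
  unfold th, u, w, Cdiv. rewrite <- RtoC_inv by exact hh.
  apply injective_projections; simpl; field; now split.
Qed.

(* The k-th summand of the (2k+n)-th term of the generating series is the product
   of the k-th term of the series of [expI th] and the n-th term of [e_q z]. *)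
Lemma generating_term_eq k n :
  ((Ci * RtoC th) ^ k / RtoC (INR (fact k)) * eq_term q z n)%C =
  ((Ci / RtoC hbar) ^ (2 * k + n) * RtoC (p ^ (2 * k + n)) / RtoC (qfact q (2 * k + n)) *
   (w ^ k * RtoC (qfact q (2 * k + n)) * RtoC (x ^ n)
      / (RtoC (qfact q n) * RtoC (INR (fact k)))))%C.
Proof.
  unfold eq_term, z. rewrite RtoC_mult, Cmult_assoc. fold u.
  rewrite Ci_th_eq, !RtoC_pow, <- Cpow_mult_l. fold u.
  rewrite !Cpow_mult_l, Cpow_add_r, Cpow_mult_r.
  pose proof (qfact_neq_0 q hq n). pose proof (qfact_neq_0 q hq (2 * k + n)).
  pose proof (INR_fact_neq_0 k).
  field. repeat split; apply RtoC_neq_0; assumption.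
Qed.

Lemma is_series_Hs_generating :
  is_series
    (fun N => ((Ci / RtoC hbar) ^ N * RtoC (p ^ N) / RtoC (qfact q N) * Hs q hbar m N x t)%C)
    (expI th * e_q q z)%C.
Proof.
  set (v := fun k => ((Ci * RtoC th) ^ k / RtoC (INR (fact k)))%C).
  assert (Av : ex_series (fun n => Cmod (at_even v n))).
  { exists (exp (Rabs th)).
    eapply is_series_ext; [|exact (is_series_at_even _ _ (exp_series (Rabs th)))].
    intros n. rewrite Cmod_at_even. unfold at_even. destruct (Nat.even n); [|reflexivity].
    unfold v. rewrite Cmod_div by apply RtoC_neq_0, INR_fact_neq_0.
    rewrite Cmod_pow, Cmod_mult, Cmod_Ci, !Cmod_R, Rmult_1_l.
    now rewrite (Rabs_pos_eq (INR _)) by apply pos_INR. }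
  pose proof (is_series_Cmult _ _ _ _ (is_series_at_even _ _ (is_series_expI th))
                (is_series_e_q q hq z) Av (ex_series_Cmod_eq_term q hq z)) as Hprod.
  eapply is_series_ext; [|exact Hprod].
  intros N. fold v. change (@at_even C_NormedModule v) with (@at_even C_AbelianMonoid v).
  cbv beta. rewrite sum_n_even_support.
  2: { intros k. rewrite at_even_S_double. apply Cmult_0_l. }
  unfold Hs. rewrite <- (sum_n_mult_l (K := C_Ring)).
  apply sum_n_ext_loc. intros k Hk. rewrite at_even_double.
  assert (Hdiv2 := Nat.div2_odd N).
  assert (exists n, N = (2 * k + n)%nat) as [n ->] by (exists (N - 2 * k)%nat; lia).
  replace (2 * k + n - 2 * k)%nat with n by lia.
  apply generating_term_eq.
Qed.

End GeneratingFunction.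

(* Qualified: [Dx] alone denotes [Rderiv.Dx] from the Reals library. *)
Lemma Dx_sum_n q (f : nat -> R -> R -> C) M x t :
  Defs.Dx q (fun y s => sum_n (fun k => f k y s) M) x t = sum_n (fun k => Defs.Dx q (f k) x t) M.
Proof.
  unfold Defs.Dx. cbv beta. induction M as [|M IH].
  - now rewrite !sum_O.
  - rewrite !sum_Sn, <- IH. change plus with Cplus. C_goal. unfold Cdiv. ring.
Qed.

Lemma Dx_ext_nonzero q (f g : R -> R -> C) x t :
  0 < q -> x <> 0 -> (forall y, y <> 0 -> f y t = g y t) -> Defs.Dx q f x t = Defs.Dx q g x t.
Proof.
  intros Hq Hx Hfg. unfold Defs.Dx.
  rewrite (Hfg x Hx), (Hfg (q * x)); [reflexivity|].
  apply Rmult_integral_contrapositive. split; lra.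
Qed.

Lemma Dx_monomial q (c : C) n x t :
  q <> 1 -> x <> 0 ->
  Defs.Dx q (fun y _ => (RtoC (y ^ n) * c)%C) x t = (RtoC (x ^ pred n) * (RtoC (qint q n) * c))%C.
Proof.
  intros Hq Hx. unfold Defs.Dx.
  assert (Hq1 : q - 1 <> 0) by lra.
  assert (E : (q * x) ^ n - x ^ n = qint q n * x ^ pred n * ((q - 1) * x)).
  { unfold qint. destruct n as [|n]; simpl; [field | rewrite Rpow_mult_distr; field]; exact Hq1. }
  transitivity (RtoC ((q * x) ^ n - x ^ n) * c / RtoC ((q - 1) * x))%C.
  { rewrite RtoC_minus. C_goal. unfold Cdiv. ring. }
  rewrite E, !RtoC_mult. C_goal. field. split; now apply RtoC_neq_0.
Qed.

Lemma Dx_monomial_sum q (e : nat -> nat) (c : nat -> C) M (F : R -> R -> C) x t :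
  1 < q -> x <> 0 -> (forall y, y <> 0 -> F y t = sum_n (fun k => RtoC (y ^ e k) * c k)%C M) ->
  Defs.Dx q F x t = sum_n (fun k => RtoC (x ^ pred (e k)) * (RtoC (qint q (e k)) * c k))%C M.
Proof.
  intros Hq Hx HF.
  rewrite (Dx_ext_nonzero q F (fun y _ => sum_n (fun k => RtoC (y ^ e k) * c k)%C M))
    by (lra || auto).
  rewrite (Dx_sum_n q (fun k y _ => RtoC (y ^ e k) * c k)%C).
  apply sum_n_ext. intros k. apply Dx_monomial; lra.
Qed.

Lemma Dx2_monomial_sum q (e : nat -> nat) (c : nat -> C) M (F : R -> R -> C) x t :
  1 < q -> x <> 0 -> (forall y, y <> 0 -> F y t = sum_n (fun k => RtoC (y ^ e k) * c k)%C M) ->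
  Dx2 q F x t =
  sum_n (fun k => RtoC (x ^ pred (pred (e k))) *
                  (RtoC (qint q (pred (e k))) * (RtoC (qint q (e k)) * c k)))%C M.
Proof.
  intros Hq Hx HF. unfold Dx2.
  apply (Dx_monomial_sum q (fun k => pred (e k)) (fun k => RtoC (qint q (e k)) * c k)%C);
    [exact Hq | exact Hx|].
  intros y Hy. now apply Dx_monomial_sum.
Qed.

Lemma sum_n_Sl {G : AbelianMonoid} (f : nat -> G) M :
  sum_n f (S M) = plus (f 0%nat) (sum_n (fun k => f (S k)) M).
Proof.
  induction M as [|M IH].
  - now rewrite sum_Sn, !sum_O.
  - now rewrite sum_Sn, IH, (sum_Sn (fun k => f (S k))), plus_assoc.
Qed.

Lemma sum_n_reindex_pred {G : AbelianMonoid} (f g : nat -> G) M :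
  f 0%nat = zero -> g M = zero -> (forall k, (k < M)%nat -> f (S k) = g k) ->
  sum_n f M = sum_n g M.
Proof.
  intros Hf0 HgM Hfg. destruct M as [|M].
  - now rewrite !sum_O, Hf0, HgM.
  - rewrite sum_n_Sl, Hf0, plus_zero_l, sum_Sn, HgM, plus_zero_r.
    apply sum_n_ext_loc. intros k Hk. apply Hfg. lia.
Qed.

Lemma is_derive_RtoC_scal (f : R -> R) t f' (c : C) :
  is_derive f t f' -> is_derive (fun s => (RtoC (f s) * c)%C) t (RtoC f' * c)%C.
Proof.
  intros H. destruct c as [c1 c2].
  assert (E : forall r, (RtoC r * (c1, c2))%C = (r * c1, r * c2))
    by (intros r; apply injective_projections; simpl; ring).
  rewrite E. apply (is_derive_ext (fun s => (f s * c1, f s * c2))); [intros s; now rewrite E|].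
  exact (@is_derive_scal_l R_AbsRing (prod_NormedModule R_AbsRing R_NormedModule R_NormedModule)
           f t f' (c1, c2) H).
Qed.

Lemma is_derive_sum_n_C (f : nat -> R -> C) (d : nat -> C) M t :
  (forall k, is_derive (f k) t (d k)) ->
  is_derive (fun s => sum_n (fun k => f k s) M) t (sum_n d M).
Proof.
  intros H.
  exact (@is_derive_sum_n R_AbsRing (prod_NormedModule R_AbsRing R_NormedModule R_NormedModule)
           f M t d (fun k _ => H k)).
Qed.

Lemma qint_0 q : qint q 0 = 0.
Proof. unfold qint. simpl. unfold Rdiv. now rewrite Rminus_diag, Rmult_0_l. Qed.

Section QSchrodinger.
Variables q hbar m : R.
Hypothesis hq : 1 < q.
Variable N : nat.

Let nu : C := (Ci * RtoC (hbar / (2 * m)))%C.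

Definition Hs_coef (k : nat) : C :=
  (nu ^ k * RtoC (qfact q N) / (RtoC (qfact q (N - 2 * k)) * RtoC (INR (fact k))))%C.

Lemma Hs_monomial_sum y s :
  Hs q hbar m N y s =
  sum_n (fun k => RtoC (y ^ (N - 2 * k)) * (RtoC (s ^ k) * Hs_coef k))%C (Nat.div2 N).
Proof.
  unfold Hs. apply sum_n_ext. intros k. unfold Hs_coef, nu.
  replace (hbar * s / (2 * m)) with (hbar / (2 * m) * s) by (unfold Rdiv; ring).
  rewrite RtoC_mult, Cmult_assoc, Cpow_mult_l, !RtoC_pow.
  C_goal. unfold Cdiv. ring.
Qed.

Lemma Hs_coef_S k : (2 * S k <= N)%nat ->
  (RtoC (INR (S k)) * Hs_coef (S k) =
   nu * (RtoC (qint q (pred (N - 2 * k))) * (RtoC (qint q (N - 2 * k)) * Hs_coef k)))%C.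
Proof.
  intros Hk. unfold Hs_coef.
  set (n := (N - 2 * S k)%nat).
  replace (N - 2 * k)%nat with (S (S n)) by (unfold n; lia). simpl pred.
  change (qfact q (S (S n))) with (qfact q n * qint q (S n) * qint q (S (S n))).
  change (fact (S k)) with (S k * fact k)%nat. rewrite mult_INR, Cpow_S, !RtoC_mult.
  pose proof (qfact_neq_0 q hq n). pose proof (INR_fact_neq_0 k).
  assert (qint q (S n) <> 0) by (apply Rgt_not_eq, qint_pos; auto; lia).
  assert (qint q (S (S n)) <> 0) by (apply Rgt_not_eq, qint_pos; auto; lia).
  assert (INR (S k) <> 0) by (apply not_0_INR; lia).
  C_goal. field. repeat split; now apply RtoC_neq_0.
Qed.

Lemma Hs_q_schrodinger x t : x <> 0 ->
  is_derive (fun s => Hs q hbar m N x s) t (nu * Dx2 q (Hs q hbar m N) x t)%C.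
Proof.
  intros Hx.
  rewrite (Dx2_monomial_sum q (fun k => N - 2 * k)%nat (fun k => RtoC (t ^ k) * Hs_coef k)%C
             (Nat.div2 N))
    by (auto || (intros y _; apply Hs_monomial_sum)).
  apply (is_derive_ext (fun s =>
           sum_n (fun k => RtoC (x ^ (N - 2 * k)) * (RtoC (s ^ k) * Hs_coef k))%C (Nat.div2 N))).
  { intros s. symmetry. apply Hs_monomial_sum. }
  rewrite <- (sum_n_mult_l (K := C_Ring)).
  replace (sum_n _ (Nat.div2 N))
    with (sum_n (fun k => RtoC (INR k * t ^ pred k) * (RtoC (x ^ (N - 2 * k)) * Hs_coef k))%C
                (Nat.div2 N)).
  - apply is_derive_sum_n_C. intros k.
    apply (is_derive_ext (fun s => RtoC (s ^ k) * (RtoC (x ^ (N - 2 * k)) * Hs_coef k))%C).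
    { intros s. C_goal. ring. }
    apply is_derive_RtoC_scal. auto_derive; [trivial | ring].
  - pose proof (Nat.div2_odd N) as HN.
    apply sum_n_reindex_pred.
    + apply injective_projections; simpl; ring.
    + (* N - 2 (N/2) <= 1, so the last term carries the factor [0]_q = 0. *)
      replace (pred (N - 2 * Nat.div2 N)) with 0%nat by (destruct (Nat.odd N); simpl in HN; lia).
      rewrite qint_0. apply injective_projections; simpl; ring.
    + intros k Hk. change (pred (S k)) with k.
      replace (pred (pred (N - 2 * k))) with (N - 2 * S k)%nat by lia.
      transitivity (RtoC (x ^ (N - 2 * S k)) * RtoC (t ^ k) * (RtoC (INR (S k)) * Hs_coef (S k)))%C.
      { rewrite RtoC_mult. C_goal. ring. }
      rewrite Hs_coef_S by lia. change mult with Cmult. C_goal. ring.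
Qed.

End QSchrodinger.

Theorem mainTheorem13 (q hbar m : R) (hq : 1 < q) (hh : 0 < hbar) (hm : 0 < m) :
  (forall x t p : R,
     is_series
       (fun N : nat =>
          ((Ci / RtoC hbar) ^ N * RtoC (p ^ N) / RtoC (qfact q N) * Hs q hbar m N x t)%C)
       (expI (- (p ^ 2 / (2 * m)) * t / hbar) * e_q q (Ci / RtoC hbar * RtoC (p * x)))%C)
  /\
  (forall (N : nat) (x t : R), x <> 0 ->
     is_derive (fun s : R => Hs q hbar m N x s) t
       ((Ci * RtoC (hbar / (2 * m))) * Dx2 q (Hs q hbar m N) x t)%C).
Proof.
  split.
  - intros x t p. apply is_series_Hs_generating; lra.
  - intros N x t Hx. now apply Hs_q_schrodinger.
Qed.
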